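(* Let $p \geq q$ and $n \geq 1$ be positive integers and let $B$ be a $p \times q$ matrix. Let $C$ be the $(nq+p)\times(nq+p)$ block matrix $$C=\begin{bmatrix} 0 & B & B & \cdots & B\\ B^T & 0 & 0 & \cdots & 0\\ B^T & 0 & 0 & \cdots & 0\\ \vdots & \vdots & \vdots & \ddots & \vdots\\ B^T & 0 & 0 & \cdots & 0\end{bmatrix},$$ with one block row/column of size $p$ followed by $n$ block rows/columns of size $q$ (so $B$ appears $n$ times in the first block row and $B^T$ appears $n$ times in the first block column). Let $D$ be the $(np+q)\times(np+q)$ block matrix $$D=\begin{bmatrix} 0 & B^T & B^T & \cdots & B^T\\ B & 0 & 0 & \cdots & 0\\ B & 0 & 0 & \cdots & 0\\ \vdots & \vdots & \vdots & \ddots & \vdots\\ B & 0 & 0 & \cdots & 0\end{bmatrix},$$ with one block row/column of size $q$ followed by $n$ block rows/columns of size $p$. Then $D$ and $C \oplus 0_{(n-1)(p-q)}$ are cospectral.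
   Context: For matrices $X,Y$, $X\oplus Y$ denotes the block diagonal matrix $\begin{bmatrix} X&0\\0&Y\end{bmatrix}$; $0_m$ is the $m\times m$ zero matrix, and $0$ denotes a zero matrix of appropriate size. Two square matrices are cospectral if they have the same eigenvalues with the same multiplicities (i.e. the same characteristic polynomial). *)

From HB Require Import structures.
From mathcomp Require Import all_boot all_order all_algebra.
Set Implicit Arguments. Unset Strict Implicit. Unset Printing Implicit Defensive.
Import GRing.Theory.
Local Open Scope ring_scope.

(* tile_mx q n : the q x (n*q) matrix [I_q I_q ... I_q] (n copies of I_q):
   entry (i, j) is 1 iff i = j mod q. *)
Definition tile_mx (R : nzRingType) (q n : nat) : 'M[R]_(q, n * q) :=
  \matrix_(i < q, j < n * q) ((nat_of_ord i == (nat_of_ord j %% q)%N)%:R : R).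

(* hub_mx B n = [[0, B B ... B], [B^T; 0], ..., [B^T; 0]] with n copies of B,
   for B : 'M_(p, q); a square matrix of size p + n*q. *)
Definition hub_mx (R : nzRingType) (p q n : nat) (B : 'M[R]_(p, q))
  : 'M[R]_(p + n * q) :=
  block_mx 0 (B *m tile_mx R q n) (B *m tile_mx R q n)^T 0.

Definition cospectral (R : comNzRingType) (m k : nat)
  (A : 'M[R]_m) (A' : 'M[R]_k) : Prop := char_poly A = char_poly A'.

(** Both matrices are bipartite: [D] has parts of sizes [q] and [n p] with
    biadjacency block [X = B^T [I_p ... I_p]], and [C] has parts of sizes [p]
    and [n q] with [Y = B [I_q ... I_q]].  For a bipartite matrix with
    biadjacency block [X : a x b], a Schur complement gives
    [x^(a+b) chi(x) = x^(2b) det(x^2 - X X^T)].  Here [X X^T = n B^T B] and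
    [Y Y^T = n B B^T], and by Sylvester's determinant identity
    [x^(2q) det(x^2 - n B B^T) = x^(2p) det(x^2 - n B^T B)], so the two
    characteristic polynomials differ by the factor [x^((n-1)(p-q))]. *)

From mathcomp Require Import all_boot all_order all_algebra.
From mathcomp Require Import zify.
Set Implicit Arguments. Unset Strict Implicit. Unset Printing Implicit Defensive.
Import GRing.Theory.
Local Open Scope ring_scope.

Section ScalarBlockDet.

Variables (R : comNzRingType) (a b : nat) (t : R).
Variables (Y : 'M[R]_(a, b)) (Z : 'M[R]_(b, a)).

Lemma det_block_scalar_mxl :
  t ^+ (a + b) * \det (block_mx t%:M Y Z t%:M) = t ^+ (2 * b) * \det ((t * t)%:M - Y *m Z).
Proof.
have E : block_mx t%:M Y Z t%:M *m block_mx t%:M 0 (- Z) t%:M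
   = block_mx ((t * t)%:M - Y *m Z) (t *: Y) 0 (t * t)%:M.
  rewrite mulmx_block !mul_scalar_mx !mul_mx_scalar !mulmx0 ?addr0 ?add0r !scale_scalar_mx.
  by rewrite mulmxN scaler0 add0r scalerN subrr.
have := congr1 determinant E.
rewrite det_mulmx det_ublock det_lblock !det_scalar => E'.
by rewrite exprD mulrC E' mulrC -expr2 -exprM mulnC.
Qed.

Lemma det_block_scalar_mxr :
  t ^+ (a + b) * \det (block_mx t%:M Y Z t%:M) = t ^+ (2 * a) * \det ((t * t)%:M - Z *m Y).
Proof.
have E : block_mx t%:M Y Z t%:M *m block_mx t%:M (- Y) 0 t%:M
   = block_mx (t * t)%:M 0 (t *: Z) ((t * t)%:M - Z *m Y).
  rewrite mulmx_block !mul_scalar_mx !mul_mx_scalar !mulmx0 ?addr0 ?add0r !scale_scalar_mx.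
  by rewrite mulmxN scaler0 addr0 scalerN addNr addrC.
have := congr1 determinant E.
rewrite det_mulmx det_ublock det_lblock !det_scalar => E'.
by rewrite exprD mulrC E' -expr2 -exprM mulnC.
Qed.

Lemma det_scalar_sub_mulmxC :
  t ^+ (2 * b) * \det ((t * t)%:M - Y *m Z) = t ^+ (2 * a) * \det ((t * t)%:M - Z *m Y).
Proof. by rewrite -det_block_scalar_mxl det_block_scalar_mxr. Qed.

End ScalarBlockDet.

Lemma char_poly_bipartite (R : comNzRingType) (a b : nat) (X : 'M[R]_(a, b)) :
  'X ^+ (a + b) * char_poly (block_mx 0 X X^T 0)
  = 'X ^+ (2 * b) * \det (('X * 'X)%:M - map_mx polyC (X *m X^T)).
Proof.
rewrite /char_poly /char_poly_mx map_block_mx (scalar_mx_block a b) opp_block_mx.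
rewrite add_block_mx !map_mx0 !oppr0 !addr0 !add0r -map_trmx.
by rewrite det_block_scalar_mxl mulmxN mulNmx opprK map_mxM map_trmx.
Qed.

Lemma char_poly_block_diag0 (R : comNzRingType) (a k : nat) (A : 'M[R]_a) :
  char_poly (block_mx A 0 0 (0 : 'M[R]_k)) = char_poly A * 'X ^+ k.
Proof.
by rewrite /char_poly char_block_diag_mx det_ublock /char_poly_mx map_mx0 subr0 det_scalar.
Qed.

Lemma sum_tile (R : nzRingType) (q n i j : nat) : (i < q)%N -> (j < q)%N ->
  \sum_(0 <= k < n * q) ((i == (k %% q)%N)%:R * (j == (k %% q)%N)%:R : R) = (i == j)%:R *+ n.
Proof.
move=> iq jq; elim: n => [|n IH]; first by rewrite mul0n big_geq.
rewrite mulSn (big_cat_nat _ (leq_addr _ _)) //= mulrS.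
have -> : \sum_(q <= k < q + n * q) ((i == (k %% q)%N)%:R * (j == (k %% q)%N)%:R : R)
        = \sum_(0 <= k < n * q) ((i == (k %% q)%N)%:R * (j == (k %% q)%N)%:R : R).
  by rewrite -{1}(add0n q) big_addn addKn; apply: eq_bigr => k _; rewrite modnDr.
rewrite IH; congr (_ + _).
rewrite (@eq_big_nat _ _ _ _ _ _ (fun k => if k == i then (j == i)%:R else 0)).
  by rewrite -big_mkcond big_nat1_eq iq eq_sym.
move=> k /andP [_ kq]; rewrite modn_small // eq_sym.
by case: eqP => [->|_]; rewrite ?mul1r ?mul0r.
Qed.

Lemma tile_mx_mul_tr (R : nzRingType) (q n : nat) :
  tile_mx R q n *m (tile_mx R q n)^T = (n%:R : R)%:M.
Proof.
apply/matrixP => i j; rewrite !mxE.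
under eq_bigr => k _ do rewrite !mxE.
rewrite -(big_mkord xpredT (fun k => (i == (k %% q)%N :> nat)%:R * (j == (k %% q)%N :> nat)%:R)).
by rewrite sum_tile // val_eqE; case: (i == j); rewrite ?mulr1n ?mul0rn.
Qed.

Lemma char_poly_hub (R : comNzRingType) (p q n : nat) (B : 'M[R]_(p, q)) :
  'X ^+ (p + n * q) * char_poly (hub_mx n B)
  = 'X ^+ (2 * (n * q)) * \det (('X * 'X)%:M - map_mx polyC (n%:R *: (B *m B^T))).
Proof.
rewrite char_poly_bipartite trmx_mul mulmxA -(mulmxA B) tile_mx_mul_tr.
by rewrite mul_mx_scalar scalemxAl.
Qed.

Theorem theorem3p2 (R : fieldType) (p q n : nat) (B : 'M[R]_(p, q)) :
  (0 < q)%N -> (q <= p)%N -> (1 <= n)%N ->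
  cospectral (hub_mx n B^T)
    (block_mx (hub_mx n B) 0 0 (0 : 'M[R]_((n - 1) * (p - q)))).
Proof.
move=> _ qp n1; rewrite /cospectral char_poly_block_diag0.
set k := ((n - 1) * (p - q))%N.
have charD := char_poly_hub n B^T; rewrite trmxK in charD.
have charC := char_poly_hub n B.
set dD := \det _ in charD; set dC := \det _ in charC.
have sylvester : 'X ^+ (2 * q) * dC = 'X ^+ (2 * p) * dD.
  by rewrite /dC /dD scalemxAl scalemxAr !map_mxM det_scalar_sub_mulmxC.
have charC' : 'X ^+ (p + n * q + 2 * q) * char_poly (hub_mx n B) = 'X ^+ (2 * (n * q) + 2 * p) * dD.
  by rewrite exprD mulrAC charC -mulrA [dC * _]mulrC sylvester mulrA -exprD.
have Xn_neq0 m : 'X ^+ m != 0 :> {poly R} by rewrite expf_neq0 ?polyX_eq0.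
apply: (mulfI (Xn_neq0 (p + n * q + 2 * q + (q + n * p))%N)).
have -> : 'X ^+ (p + n * q + 2 * q + (q + n * p)) * char_poly (hub_mx n B^T)
        = 'X ^+ (p + n * q + 2 * q + 2 * (n * p)) * dD.
  by rewrite exprD -mulrA charD mulrA -exprD.
have -> : 'X ^+ (p + n * q + 2 * q + (q + n * p)) * (char_poly (hub_mx n B) * 'X ^+ k)
        = 'X ^+ (q + n * p + k + (2 * (n * q) + 2 * p)) * dD.
  by rewrite mulrCA mulrC -exprD -addnA addnC exprD -mulrA charC' mulrA -exprD.
by congr (_ ^+ _ * _); rewrite /k; nia.
Qed.
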